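(* Let $Q$ be a quantity space over a field $K$. Then $Q/{\sim}$, with multiplication $[x][y]=[xy]$ and identity $[1_Q]$, is an abelian group.
   Context: A scalable monoid over a (unital, associative) ring $R$ is a monoid $X$ (identity $1_X$, product written $xy$) together with a map $R\times X\to X$, $(\alpha,x)\mapsto\alpha\cdot x$, such that $1\cdot x=x$, $\alpha\cdot(\beta\cdot x)=\alpha\beta\cdot x$ and $\alpha\cdot(xy)=(\alpha\cdot x)y=x(\alpha\cdot y)$ for all $\alpha,\beta\in R$, $x,y\in X$. A quantity space over a field $K$ is a commutative scalable monoid $Q$ over $K$ for which there exists a finite set $\{e_1,\ldots,e_n\}$ of invertible elements of $Q$ (a basis) such that every $x\in Q$ has a unique expansion $x=\mu\cdot\prod_{i=1}^n e_i^{k_i}$ with $\mu\in K$ and $k_1,\ldots,k_n\in\mathbb{Z}$. On $Q$, $x\sim y$ means $\alpha\cdot x=\beta\cdot y$ for some $\alpha,\beta\in K$; this is an equivalence relation compatible with multiplication, $[x]$ denotes the class of $x$, and $Q/{\sim}$ is the set of classes. *)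

From HB Require Import structures.
From mathcomp Require Import all_boot all_order all_algebra.
From Stdlib Require Import ClassicalEpsilon.
Set Implicit Arguments. Unset Strict Implicit. Unset Printing Implicit Defensive.
Import GRing.Theory.
Local Open Scope ring_scope.

Record scalable_monoid (R : nzRingType) := ScalableMonoid {
  sm_car :> Type;
  sm_mul : sm_car -> sm_car -> sm_car;
  sm_one : sm_car;
  sm_scale : R -> sm_car -> sm_car;
  sm_mulA : forall x y z, sm_mul x (sm_mul y z) = sm_mul (sm_mul x y) z;
  sm_mul1x : forall x, sm_mul sm_one x = x;
  sm_mulx1 : forall x, sm_mul x sm_one = x;
  sm_scale1 : forall x, sm_scale 1 x = x;
  sm_scaleA : forall (a b : R) x, sm_scale a (sm_scale b x) = sm_scale (a * b) x;
  sm_scale_mull : forall (a : R) x y, sm_scale a (sm_mul x y) = sm_mul (sm_scale a x) y;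
  sm_scale_mulr : forall (a : R) x y, sm_scale a (sm_mul x y) = sm_mul x (sm_scale a y)
}.

Section QS.
Variable K : fieldType.
Variable Q : scalable_monoid K.

Local Notation mul := (@sm_mul K Q).
Local Notation one := (@sm_one K Q).
Local Notation scale := (@sm_scale K Q).

Definition zpow (a ainv : Q) (z : int) : Q :=
  match z with
  | Posz m => iter m (mul a) one
  | Negz m => iter m.+1 (mul ainv) one
  end.

Definition prodpow n (e einv : 'I_n -> Q) (k : {ffun 'I_n -> int}) : Q :=
  foldr (fun i acc => mul (zpow (e i) (einv i) (k i)) acc) one (enum 'I_n).

Definition is_quantity_space : Prop :=
  (forall x y : Q, mul x y = mul y x) /\
  exists (n : nat) (e einv : 'I_n -> Q),
    (forall i, mul (e i) (einv i) = one /\ mul (einv i) (e i) = one) /\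
    forall x : Q, exists! p : K * {ffun 'I_n -> int},
      x = scale p.1 (prodpow e einv p.2).

Definition qsim (x y : Q) : Prop := exists a b : K, scale a x = scale b y.

Definition qclass_of (x : Q) : Q -> Prop := fun y => qsim x y.

Definition qclass : Type := {A : Q -> Prop | exists x, A = qclass_of x}.

Definition qcls (x : Q) : qclass := exist _ (qclass_of x) (ex_intro _ x erefl).

Definition qrep (A : qclass) : Q :=
  proj1_sig (constructive_indefinite_description _ (proj2_sig A)).

Definition qmul (A B : qclass) : qclass := qcls (mul (qrep A) (qrep B)).

Definition qone : qclass := qcls one.

End QS.

(** Scaling by [0] is a monoid endomorphism of any scalable monoid, and
    [x ~ y] holds exactly when [0.x = 0.y]: from [a.x = b.y] scale both
    sides by [0].  So [~] is the kernel congruence of this endomorphism, and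
    [Q/~] inherits associativity, the unit and (in a quantity space)
    commutativity from [Q].  Inverses come from the basis: every [x] is
    [mu . prod e_i ^ k_i], and the product of the [e_i ^ k_i] is invertible. *)

From mathcomp Require Import all_boot all_order all_algebra.
From Stdlib Require Import ClassicalEpsilon FunctionalExtensionality.
From Stdlib Require Import PropExtensionality ProofIrrelevance.
Set Implicit Arguments.
Unset Strict Implicit.
Import GRing.Theory.
Local Open Scope ring_scope.

Section ScalableMonoid.
Variables (R : nzRingType) (Q : scalable_monoid R).
Implicit Types x y : Q.

Local Notation mul := (@sm_mul R Q).
Local Notation one := (@sm_one R Q).
Local Notation scale := (@sm_scale R Q).

Lemma sm_scale0_scale (a : R) x : scale 0 (scale a x) = scale 0 x.
Proof. by rewrite sm_scaleA mul0r. Qed.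

Lemma sm_scale0_mul x y : scale 0 (mul x y) = mul (scale 0 x) (scale 0 y).
Proof. by rewrite -sm_scale_mulr -sm_scale_mull sm_scale0_scale. Qed.

Definition linvertible x := exists w, mul w x = one.

Lemma linvertible_one : linvertible one.
Proof. by exists one; rewrite sm_mul1x. Qed.

Lemma linvertible_mul x y : linvertible x -> linvertible y -> linvertible (mul x y).
Proof.
move=> [w1 w1x] [w2 w2y]; exists (mul w2 w1).
by rewrite sm_mulA -(sm_mulA w2) w1x sm_mulx1.
Qed.

Lemma linvertible_iter m x : linvertible x -> linvertible (iter m (mul x) one).
Proof.
move=> Hx; elim: m => [|m IHm] /=; first exact: linvertible_one.
exact: linvertible_mul.
Qed.

End ScalableMonoid.

Section QuantityClasses.
Variables (K : fieldType) (Q : scalable_monoid K).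
Implicit Types x y : Q.

Local Notation mul := (@sm_mul K Q).
Local Notation one := (@sm_one K Q).
Local Notation scale := (@sm_scale K Q).

Lemma linvertible_zpow (a ainv : Q) (z : int) :
  mul a ainv = one -> mul ainv a = one -> linvertible (zpow a ainv z).
Proof.
move=> aainv ainva; case: z => m; apply: linvertible_iter.
- by exists ainv.
- by exists a.
Qed.

Lemma linvertible_prodpow n (e einv : 'I_n -> Q) (k : {ffun 'I_n -> int}) :
  (forall i, mul (e i) (einv i) = one /\ mul (einv i) (e i) = one) ->
  linvertible (prodpow e einv k).
Proof.
move=> e_unit; rewrite /prodpow.
elim: (enum 'I_n) => [|i s IHs] /=; first exact: linvertible_one.
by apply: linvertible_mul => //; case: (e_unit i) => ? ?; apply: linvertible_zpow.
Qed.

Lemma qsimP x y : qsim x y <-> scale 0 x = scale 0 y.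
Proof.
split=> [[a [b axby]] | x0y0]; last by exists 0, 0.
by rewrite -(sm_scale0_scale a x) axby sm_scale0_scale.
Qed.

Lemma qcls_eqP x y : qcls x = qcls y <-> scale 0 x = scale 0 y.
Proof.
split=> [/(congr1 (@proj1_sig _ _)) /= cls_xy | x0y0].
  have : qclass_of y y by apply/qsimP.
  by rewrite -cls_xy => /qsimP.
apply: eq_sig_hprop => [A p q | /=]; first exact: proof_irrelevance.
apply: functional_extensionality => z; apply: propositional_extensionality.
by rewrite /qclass_of !qsimP x0y0.
Qed.

Lemma qcls_rep (A : qclass Q) : qcls (qrep A) = A.
Proof.
apply: eq_sig_hprop => [B p q | /=]; first exact: proof_irrelevance.
by rewrite /qrep; case: constructive_indefinite_description.
Qed.

Lemma scale0_qrep x : scale 0 (qrep (qcls x)) = scale 0 x.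
Proof. by apply/qcls_eqP; rewrite qcls_rep. Qed.

Lemma qmul_qcls x y : qmul (qcls x) (qcls y) = qcls (mul x y).
Proof. by apply/qcls_eqP; rewrite !sm_scale0_mul !scale0_qrep. Qed.

Lemma quantity_space_qcls_inv x :
  is_quantity_space Q -> exists w, qcls (mul w x) = qcls one.
Proof.
move=> [_ [n [e [einv [e_unit expand]]]]].
have [[mu k] [/= -> _]] := expand x.
have [w wP] := linvertible_prodpow k e_unit.
exists w; apply/qcls_eqP.
by rewrite -sm_scale_mulr wP sm_scale0_scale.
Qed.

End QuantityClasses.

Theorem proposition3p18 (K : fieldType) (Q : scalable_monoid K)
  (HQ : is_quantity_space Q) :
  (* the multiplication on Q/~ satisfies [x][y] = [xy] (well-definedness) *)
  (forall x y : Q, qmul (qcls x) (qcls y) = qcls (sm_mul x y)) /\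
  (* and (Q/~, qmul, [1_Q]) is an abelian group *)
  (forall A B C : qclass Q, qmul A (qmul B C) = qmul (qmul A B) C) /\
  (forall A B : qclass Q, qmul A B = qmul B A) /\
  (forall A : qclass Q, qmul (qone Q) A = A) /\
  (forall A : qclass Q, exists B : qclass Q, qmul B A = qone Q).
Proof.
have [mulC _] := HQ.
split; first exact: qmul_qcls.
split; first by move=> A B C; rewrite -(qcls_rep A) -(qcls_rep B) -(qcls_rep C)
  !qmul_qcls sm_mulA.
split; first by move=> A B; rewrite -(qcls_rep A) -(qcls_rep B) !qmul_qcls mulC.
split; first by move=> A; rewrite -(qcls_rep A) qmul_qcls sm_mul1x.
move=> A; have [w wA] := quantity_space_qcls_inv (qrep A) HQ.
by exists (qcls w); rewrite -{1}(qcls_rep A) qmul_qcls.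
Qed.
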